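(* Let $k\ge 1$ be an integer and let $F(z,u)=\sum_{P} z^{\mathrm{up}(P)}u^{\mathrm{end}(P)}$, where the sum runs over all nonempty $k$-Dyck prefixes $P$ whose last step is an up-step, $\mathrm{up}(P)$ is the number of up-steps of $P$ and $\mathrm{end}(P)$ is the height at which $P$ ends. Then, as formal power series in $z$ (with coefficients polynomials in $u$), $$F(z,u)=zu^k\,\frac{\overline{u}-u}{1-u+zu^{k+1}},$$ where $$\overline{u}=\sum_{\ell\ge0}\frac1{1+\ell(k+1)}\binom{1+\ell(k+1)}{\ell}z^\ell$$ is the power series solution of $1-\overline{u}+z\overline{u}^{k+1}=0$.
   Context: Fix an integer $k\ge1$. A $k$-Dyck prefix is a lattice path starting at $(0,0)$ using up-steps $(1,k)$ and down-steps $(1,-1)$ that never goes below the $x$-axis. The height (level) of a point is its $y$-coordinate. *)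

From mathcomp Require Import all_boot all_order all_algebra.
Set Implicit Arguments. Unset Strict Implicit. Unset Printing Implicit Defensive.
Import Order.TTheory GRing.Theory Num.Theory.
Local Open Scope ring_scope.

(* ---- k-Dyck prefixes: a path is a seq bool, true = up-step (1,k), false = down-step (1,-1) *)
Definition ht (k : nat) (s : seq bool) : int :=
  \sum_(b <- s) (if b then (k%:Z) else (-1)).

Definition kDyck (k : nat) (s : seq bool) : bool :=
  all (fun i => 0 <= ht k (take i s)) (iota 0 (size s).+1).

(* nonempty and last step is an up-step *)
Definition endsUp (s : seq bool) : bool := last false s.

(* Such a P has m <= k*n down-steps, hence
   length < (k+1)*n + 1, so all of them are enumerated below. *)
Definition Fcoef (k n : nat) : {poly rat} :=
  \sum_(L < ((k.+1) * n).+1)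
    \sum_(t : L.-tuple bool | [&& kDyck k t, count id t == n & endsUp t])
      'X^(absz (ht k t)).

Definition fps (R : nzRingType) := nat -> R.
Definition fconst (R : nzRingType) (c : R) : fps R := fun n => if n == 0%N then c else 0.
Definition fadd (R : nzRingType) (f g : fps R) : fps R := fun n => f n + g n.
Definition fneg (R : nzRingType) (f : fps R) : fps R := fun n => - f n.
Definition fmul (R : nzRingType) (f g : fps R) : fps R :=
  fun n => \sum_(i < n.+1) f i * g (n - i)%N.
Definition fz (R : nzRingType) (f : fps R) : fps R :=
  fun n => if n is n'.+1 then f n' else 0.
Definition fpow (R : nzRingType) (f : fps R) (e : nat) : fps R :=
  iter e (fmul f) (fconst 1).

(* F(z,u) in Q[u][[z]] *)
Definition Fser (k : nat) : fps {poly rat} := fun n => Fcoef k n.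

Definition ubar (k : nat) : fps rat :=
  fun l => ('C(1 + l * k.+1, l))%:R / (1 + l * k.+1)%:R.

From mathcomp Require Import all_boot all_order all_algebra.
From mathcomp Require Import ring zify.
Import Order.TTheory GRing.Theory Num.Theory.
Set Implicit Arguments.
Unset Strict Implicit.
Unset Printing Implicit Defensive.
Local Open Scope ring_scope.

(* Let P(z,u) count all k-Dyck prefixes by up-steps and final height.  Removing
   the last step of a prefix gives the kernel equation
   P (1 - u + z u^(k+1)) = R - u, where R(z) counts the prefixes ending at
   height 0, the only ones that cannot be extended by a down-step.  A prefix
   whose last step is up is a prefix followed by an up-step, so F = z u^k P.
   It remains to see R = ubar: paths from height s down to 0 with n up-steps
   are counted by the Raney number
   r_(s+1)(n) = (s+1)/(s+1+(k+1)n) binom(s+1+(k+1)n, n), since both satisfy the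
   same first-step recurrence, and the convolution r_a * r_b = r_(a+b) shows
   r_m(n) = [z^n] ubar^m, whence also ubar = 1 + z ubar^(k+1). *)

Section TupleSums.
Variables (T : finType) (R : nmodType).

Lemma sum_tuple0 (G : seq T -> R) : \sum_(t : 0.-tuple T) G t = G [::].
Proof.
rewrite (eq_bigr (fun=> G [::])) => [|t _]; last by rewrite tuple0.
by rewrite big_const card_tuple /= addr0.
Qed.

Lemma sum_tuple_cons n (G : seq T -> R) :
  \sum_(t : n.+1.-tuple T) G t = \sum_(x : T) \sum_(t : n.-tuple T) G (x :: t).
Proof.
rewrite pair_big (reindex (fun p : T * n.-tuple T => [tuple of p.1 :: p.2])) //.
exists (fun t => (thead t, [tuple of behead t])) => [[x t] _ | t _].
  by congr pair; apply/val_inj.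
by apply/val_inj; rewrite /= [in RHS](tuple_eta t).
Qed.

Lemma sum_tuple_rev n (G : seq T -> R) :
  \sum_(t : n.-tuple T) G t = \sum_(t : n.-tuple T) G (rev t).
Proof.
rewrite (reindex (fun t : n.-tuple T => [tuple of rev t])) //.
by exists (fun t : n.-tuple T => [tuple of rev t]) => t _; apply/val_inj; rewrite /= revK.
Qed.

Lemma sum_tuple_rcons n (G : seq T -> R) :
  \sum_(t : n.+1.-tuple T) G t = \sum_(x : T) \sum_(t : n.-tuple T) G (rcons t x).
Proof.
rewrite sum_tuple_rev (sum_tuple_cons _ (fun t => G (rev t))); apply: eq_bigr => x _.
by rewrite [RHS](sum_tuple_rev _ (fun t => G (rcons t x))); apply: eq_bigr => t _; rewrite rev_cons.
Qed.

End TupleSums.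

Lemma count_rcons (T : Type) (a : pred T) s x :
  count a (rcons s x) = (count a s + a x)%N.
Proof. by rewrite -cats1 count_cat /= addn0. Qed.

Lemma fmul_constl (R : nzRingType) (c : R) (g : fps R) n :
  fmul (fconst c) g n = c * g n.
Proof.
rewrite /fmul big_ord_recl subn0 big1 ?addr0 // => i _.
by rewrite /fconst /= mul0r.
Qed.

Lemma fmul_linearS (R : nzRingType) (f : fps R) (a b : R) n :
  fmul f (fadd (fconst a) (fz (fconst b))) n.+1 = f n.+1 * a + f n * b.
Proof.
rewrite /fmul big_ord_recr big_ord_recr /= subnn subSnn big1 => [|[i /= lt_in] _].
  by rewrite /fadd /fconst /fz /= !add0r !addr0 addrC.
have -> : (n.+1 - i = (n - i.+1).+2)%N by lia.
by rewrite /fadd /fconst /fz /= addr0 mulr0.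
Qed.

(* At m = n = 0 the formula reads 0/0; the value 1 is [z^0] ubar^0. *)
Definition raney (k m n : nat) : rat :=
  if (m + n == 0)%N then 1
  else m%:R / (m + k.+1 * n)%N%:R * 'C(m + k.+1 * n, n)%:R.

Lemma raneyE k m n : (0 < m + n)%N ->
  raney k m n = m%:R / (m + k.+1 * n)%N%:R * 'C(m + k.+1 * n, n)%:R.
Proof. by rewrite /raney lt0n => /negPf ->. Qed.

Lemma raney_n0 k m : raney k m 0 = 1.
Proof.
case: m => [|m]; first by [].
by rewrite raneyE // muln0 addn0 bin0 mulr1 divff ?pnatr_eq0.
Qed.

Lemma raney0S k n : raney k 0 n.+1 = 0.
Proof. by rewrite raneyE // !mul0r. Qed.

Lemma raneySS k m n : raney k m.+1 n.+1 = raney k m n.+1 + raney k (m.+1 + k) n.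
Proof.
rewrite !raneyE; try by rewrite ?addnS ?addSn.
set N := (m + k.+1 * n.+1)%N.
have -> : (m.+1 + k.+1 * n.+1 = N.+1)%N by rewrite addSn.
have -> : (m.+1 + k + k.+1 * n = N)%N by rewrite /N mulnS; lia.
have binS : 'C(N.+1, n.+1)%:R = N.+1%:R * 'C(N, n)%:R / n.+1%:R :> rat.
  by rewrite -natrM (mul_bin_diag N.+1) natrM mulrC mulKf ?pnatr_eq0.
have binN : 'C(N, n.+1)%:R = (N - n)%:R * 'C(N, n)%:R / n.+1%:R :> rat.
  by rewrite -natrM -mul_bin_left natrM mulrC mulKf ?pnatr_eq0.
have NE : N%:R = m%:R + (k%:R + 1) * (n%:R + 1) :> rat.
  by rewrite /N natrD natrM -!natr1.
rewrite binS binN natrB ?NE; last by rewrite /N mulSn; lia.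
rewrite natrD -!natr1 NE; field.
by rewrite -NE !natr1 !pnatr_eq0 /N; lia.
Qed.

Lemma raneyD k a b n :
  \sum_(i < n.+1) raney k a i * raney k b (n - i) = raney k (a + b) n.
Proof.
elim: n a b => [|n IHn] a b; first by rewrite big_ord1 !raney_n0 mulr1.
elim: a => [|a IHa].
  rewrite big_ord_recl raney_n0 mul1r big1 ?addr0 // => i _.
  by rewrite raney0S mul0r.
rewrite big_ord_recl raney_n0 mul1r subn0.
under eq_bigr => i _ do rewrite /bump /= raneySS mulrDl subSS.
rewrite big_split /= addrA IHn.
have -> : raney k b n.+1 + \sum_(i < n.+1) raney k a i.+1 * raney k b (n - i)
          = \sum_(i < n.+2) raney k a i * raney k b (n.+1 - i).
  by rewrite [RHS]big_ord_recl raney_n0 mul1r.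
by rewrite IHa [(a.+1 + b)%N]addSn raneySS -addSn addnAC.
Qed.

Lemma ubar_raney k l : ubar k l = raney k 1 l.
Proof. by rewrite /ubar raneyE // mulnC mul1r mulrC. Qed.

Lemma fpow_ubar k e n : fpow (ubar k) e n = raney k e n.
Proof.
elim: e n => [|e IH] n.
  by rewrite /fpow /fconst; case: n => [|n]; rewrite ?raney_n0 ?raney0S.
rewrite /fpow iterS -/(fpow (ubar k) e) /fmul.
under eq_bigr => i _ do rewrite ubar_raney IH.
by rewrite raneyD.
Qed.

Lemma ubar_eqn k n :
  fadd (fadd (fconst 1) (fneg (ubar k))) (fz (fpow (ubar k) k.+1)) n = 0.
Proof.
rewrite /fadd /fneg /fconst /fz ubar_raney.
case: n => [|n]; first by rewrite raney_n0 addr0 subrr.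
by rewrite fpow_ubar raneySS raney0S !add0r addNr.
Qed.

Lemma ht_nil k : ht k [::] = 0.
Proof. by rewrite /ht big_nil. Qed.

Lemma ht_cons k b t : ht k (b :: t) = (if b then k%:Z else -1) + ht k t.
Proof. by rewrite /ht big_cons. Qed.

Lemma ht_rcons k t b : ht k (rcons t b) = ht k t + (if b then k%:Z else -1).
Proof. by rewrite /ht -cats1 big_cat big_seq1. Qed.

Lemma ht_count k t : ht k t = (k * count id t)%:Z - (size t - count id t)%:Z.
Proof.
elim: t => [|[] t IH]; first by rewrite ht_nil /= muln0.
  by rewrite ht_cons IH /= add1n subSS mulnS PoszD; ring.
by rewrite ht_cons IH /= add0n subSn ?count_size // -addn1 PoszD; ring.
Qed.

Lemma kDyck_ht k t : kDyck k t -> 0 <= ht k t.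
Proof. by move/allP/(_ (size t)); rewrite take_size mem_iota leqnn; apply. Qed.

Lemma kDyck_rcons k t b :
  kDyck k (rcons t b) = kDyck k t && (0 <= ht k (rcons t b)).
Proof.
rewrite /kDyck size_rcons -addn1 iotaD cats1 all_rcons andbC add0n.
rewrite take_oversize ?size_rcons //; congr andb.
apply: eq_in_all => i; rewrite mem_iota add0n ltnS => lt_i.
by rewrite -cats1 takel_cat.
Qed.

Definition kDyck_from (k s : nat) (t : seq bool) : bool :=
  all (fun i => 0 <= s%:Z + ht k (take i t)) (iota 0 (size t).+1).

Lemma kDyck_from0 k t : kDyck_from k 0 t = kDyck k t.
Proof. by apply: eq_all => i; rewrite add0r. Qed.

Lemma kDyck_from_cons k s b t :
  kDyck_from k s (b :: t) =
    if b then kDyck_from k (s + k) t else (0 < s)%N && kDyck_from k s.-1 t.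
Proof.
rewrite /kDyck_from -[iota 0 _]/([:: 0%N] ++ iota (1 + 0) (size t).+1).
rewrite all_cat all_seq1 take0 ht_nil addr0 le0z_nat andTb iotaDl all_map.
have step i : (0 <= s%:Z + ht k (take (1 + i) (b :: t)))
            = (0 <= s%:Z + (if b then k%:Z else -1) + ht k (take i t)).
  by rewrite add1n /= ht_cons addrA.
rewrite (eq_all step); case: b {step}.
  by apply: eq_all => i; rewrite PoszD.
case: s => [|s].
  apply/negbTE/negP => /allP /(_ 0%N); rewrite mem_iota take0 ht_nil.
  by rewrite addr0 => /(_ isT).
rewrite ltn0Sn andTb; apply: eq_all => i.
by rewrite intS (addrC 1) addrK.
Qed.

Definition returns (k s L n : nat) : rat :=
  \sum_(t : L.-tuple bool)
    [&& kDyck_from k s t, count id t == n & s%:Z + ht k t == 0]%:R.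

Lemma returns0 k s n : returns k s 0 n = ((s == 0) && (n == 0))%:R.
Proof.
rewrite /returns (sum_tuple0 (fun t =>
  [&& kDyck_from k s t, count id t == n & s%:Z + ht k t == 0]%:R)).
by rewrite /kDyck_from /= ht_nil addr0; case: s; case: n.
Qed.

Lemma returnsS k s L n :
  returns k s L.+1 n =
    (if n is n'.+1 then returns k (s + k) L n' else 0)
  + (if s is s'.+1 then returns k s' L n else 0).
Proof.
rewrite /returns (sum_tuple_cons _ (fun t =>
  [&& kDyck_from k s t, count id t == n & s%:Z + ht k t == 0]%:R)) big_bool /=.
congr (_ + _).
- case: n => [|n]; first by rewrite big1 // => t _; rewrite andbF.
  by apply: eq_bigr => t _; rewrite kDyck_from_cons ht_cons add1n eqSS addrA PoszD.
- case: s => [|s]; first by rewrite big1 // => t _; rewrite kDyck_from_cons.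
  apply: eq_bigr => t _; rewrite kDyck_from_cons ht_cons add0n.
  by rewrite intS (addrC 1) addrA addrK.
Qed.

Lemma returns_raney k s L n :
  returns k s L n = if (L == s + k.+1 * n)%N then raney k s.+1 n else 0.
Proof.
elim: L s n => [|L IH] s n.
  rewrite returns0 [0%N == _]eq_sym addn_eq0 muln_eq0 /=.
  by case: s => [|s]; case: n => [|n]; rewrite ?raney_n0.
rewrite returnsS; case: n => [|n]; case: s => [|s]; rewrite ?IH.
- by rewrite addr0 muln0.
- by rewrite add0r !muln0 !addn0 eqSS !raney_n0.
- rewrite addr0 raneySS raney0S add0r add0n.
  by congr (if _ then _ else _); apply/eqP/eqP; rewrite mulnS; lia.
- have -> : (L == s.+1 + k + k.+1 * n)%N = (L.+1 == s.+1 + k.+1 * n.+1)%N.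
    by apply/eqP/eqP; rewrite mulnS; lia.
  have -> : (L == s + k.+1 * n.+1)%N = (L.+1 == s.+1 + k.+1 * n.+1)%N.
    by apply/eqP/eqP; lia.
  by case: eqP; rewrite ?addr0 // => _; rewrite [RHS]raneySS addrC.
Qed.

Definition prefix_weight (k : nat) (t : seq bool) : {poly rat} :=
  if kDyck k t then 'X^(absz (ht k t)) else 0.

Lemma prefix_weight_up k t :
  prefix_weight k (rcons t true) = 'X^k * prefix_weight k t.
Proof.
rewrite /prefix_weight kDyck_rcons ht_rcons.
have [/kDyck_ht ht_ge0|] /= := boolP (kDyck k t); last by rewrite mulr0.
rewrite addr_ge0 // -exprD; congr (_ ^+ _).
by case: (ht k t) ht_ge0 => // h _; rewrite -PoszD absz_nat addnC.
Qed.

Lemma prefix_weight_down k t :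
  'X * prefix_weight k (rcons t false)
  = prefix_weight k t - (kDyck k t && (ht k t == 0))%:R.
Proof.
rewrite /prefix_weight kDyck_rcons ht_rcons.
have [/kDyck_ht|] /= := boolP (kDyck k t); last by rewrite mulr0 subr0.
case: (ht k t) => // -[|h] _ /=; first by rewrite mulr0 expr0 subrr.
by rewrite subr0 -exprS subn1.
Qed.

Definition prefixes (k L n : nat) : {poly rat} :=
  \sum_(t : L.-tuple bool | count id t == n) prefix_weight k t.

Lemma mulX_prefixesS k L n :
  'X * prefixes k L.+1 n
  = 'X^(k.+1) * (if n is m.+1 then prefixes k L m else 0) + prefixes k L n
    - (returns k 0 L n)%:P.
Proof.
rewrite /prefixes big_mkcond (sum_tuple_rcons _ (fun t =>
  if count id t == n then prefix_weight k t else 0)) big_bool /=.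
rewrite mulrDr !mulr_sumr -addrA; congr (_ + _).
- under eq_bigr => t _ do rewrite count_rcons addn1 prefix_weight_up.
  case: n => [|n].
    by rewrite [RHS]mulr0 big1 // => t _ /=; rewrite mulr0.
  rewrite [in RHS]big_mkcond mulr_sumr; apply: eq_bigr => t _.
  by rewrite eqSS exprS -mulrA; case: ifP; rewrite ?mulr0.
- rewrite /returns rmorph_sum -sumrN [in RHS]big_mkcond -big_split.
  apply: eq_bigr => t _.
  rewrite count_rcons addn0 kDyck_from0 add0r.
  case: ifP => _; last by rewrite andbF mulr0 /= oppr0 addr0.
  by rewrite prefix_weight_down andTb rmorph_nat.
Qed.

Lemma prefixes_vanish k L n : (k.+1 * n < L)%N -> prefixes k L n = 0.
Proof.
move=> lt_nL; apply: big1 => t /eqP count_t.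
rewrite /prefix_weight; case: ifP => // /kDyck_ht.
rewrite ht_count count_t size_tuple subr_ge0 lez_nat.
by move: lt_nL; rewrite mulSn; lia.
Qed.

Definition prefix_poly (k n : nat) : {poly rat} :=
  \sum_(L < (k.+1 * n).+1) prefixes k L n.

Lemma prefix_poly_widen k n N :
  ((k.+1 * n).+1 <= N)%N -> \sum_(L < N) prefixes k L n = prefix_poly k n.
Proof.
move=> le_N; rewrite /prefix_poly (big_ord_widen _ (fun L => prefixes k L n) le_N).
rewrite [RHS]big_mkcond; apply: eq_bigr => L _.
by case: ltnP => // /prefixes_vanish.
Qed.

Lemma prefixes0 k n : prefixes k 0 n = (n == 0%N)%:R.
Proof.
rewrite /prefixes big_mkcond (sum_tuple0 (fun t =>
  if count id t == n then prefix_weight k t else 0)) /= eq_sym.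
by case: eqP => // _; rewrite /prefix_weight /kDyck /= /ht big_nil.
Qed.

Lemma sum_returns k n : \sum_(L < (k.+1 * n).+1) returns k 0 L n = ubar k n.
Proof.
rewrite big_ord_recr big1 => [|L _]; rewrite returns_raney add0n.
  by rewrite /= eqxx add0r ubar_raney.
by rewrite /= ltn_eqF.
Qed.

Lemma prefix_poly_kernel k n :
  (1 - 'X) * prefix_poly k n
  + (if n is m.+1 then 'X^(k.+1) * prefix_poly k m else 0)
  = (ubar k n)%:P - (if n == 0%N then 'X else 0).
Proof.
set B := (k.+1 * n).+1.
set D := if n is m.+1 then prefix_poly k m else 0.
have shifted : \sum_(L < B) prefixes k L.+1 n = prefix_poly k n - (n == 0%N)%:R.
  by rewrite -(prefixes0 k) -(@prefix_poly_widen _ _ B.+1) // [in RHS]big_ord_recl addrC addKr.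
have down : \sum_(L < B) (if n is m.+1 then prefixes k L m else 0) = D.
  rewrite /D; case En : n => [|m]; first by rewrite big1.
  by apply: prefix_poly_widen; rewrite /B En ltnS leq_mul2l leqnSn orbT.
have summed : 'X * (prefix_poly k n - (n == 0%N)%:R)
              = 'X^(k.+1) * D + prefix_poly k n - (ubar k n)%:P.
  rewrite -shifted -down -sum_returns mulr_sumr.
  under eq_bigr => L _ do rewrite mulX_prefixesS.
  rewrite sumrB big_split /=.
  by rewrite -mulr_sumr -rmorph_sum.
have -> : (ubar k n)%:P = 'X^(k.+1) * D + prefix_poly k n
                          - 'X * (prefix_poly k n - (n == 0%N)%:R).
  by rewrite summed opprB addrC subrK.
by rewrite /D; case: n {B D shifted down summed} => [|m] /=; ring.
Qed.

Lemma sum_endsUp0 k n :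
  \sum_(t : 0.-tuple bool | [&& kDyck k t, count id t == n & endsUp t])
    'X^(absz (ht k t)) = 0 :> {poly rat}.
Proof. by apply: big1 => t; rewrite tuple0 /= !andbF. Qed.

Lemma sum_endsUpS k L n :
  \sum_(t : L.+1.-tuple bool | [&& kDyck k t, count id t == n.+1 & endsUp t])
    'X^(absz (ht k t)) = 'X^k * prefixes k L n.
Proof.
rewrite big_mkcond (sum_tuple_rcons _ (fun t =>
  if [&& kDyck k t, count id t == n.+1 & endsUp t]
  then 'X^(absz (ht k t)) else 0 : {poly rat})) big_bool /=.
rewrite /endsUp [X in _ + X]big1 => [|t _]; last by rewrite last_rcons !andbF.
rewrite addr0 /prefixes mulr_sumr [RHS]big_mkcond; apply: eq_bigr => t _.
rewrite last_rcons count_rcons addn1 eqSS andbT.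
case: eqP => _; rewrite ?andbF ?mulr0 // andbT -prefix_weight_up.
by rewrite /prefix_weight; case: ifP.
Qed.

Lemma Fcoef0 k : Fcoef k 0 = 0.
Proof. by rewrite /Fcoef muln0 big_ord1 sum_endsUp0. Qed.

Lemma FcoefS k n : Fcoef k n.+1 = 'X^k * prefix_poly k n.
Proof.
rewrite /Fcoef big_ord_recl sum_endsUp0 add0r.
under eq_bigr => L _ do rewrite sum_endsUpS.
by rewrite -mulr_sumr prefix_poly_widen // mulnS addSn ltnS leq_addl.
Qed.

Theorem mainTheorem1 (k : nat) (hk : (1 <= k)%N) :
  (* ubar is the power series solution of 1 - ubar + z ubar^(k+1) = 0 *)
  (forall n : nat,
     fadd (fadd (fconst 1) (fneg (ubar k))) (fz (fpow (ubar k) k.+1)) n = 0)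
  /\
  (* F(z,u) * (1 - u + z u^(k+1)) = z u^k (ubar - u)  in Q[u][[z]] *)
  (forall n : nat,
     fmul (Fser k)
          (fadd (fconst (1 - 'X)) (fz (fconst 'X^(k.+1)))) n
     = fz (fmul (fconst ('X^k : {poly rat}))
                (fadd (fun l => (ubar k l)%:P) (fneg (fconst 'X)))) n).
Proof.
split=> [|[|n]]; first exact: ubar_eqn.
  by rewrite /fmul big_ord1 /Fser Fcoef0 mul0r.
rewrite fmul_linearS /fz fmul_constl /fadd /fneg /Fser FcoefS.
have := prefix_poly_kernel k n; rewrite /fconst.
by case: n => [|n] /= kernel; rewrite ?Fcoef0 ?FcoefS -[in RHS]kernel; ring.
Qed.
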